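(* Let $(\mathbf Z_n,\mathbf A_{n\times n})$ be generated from the stochastic block model with parameters $(\pi,\rho_nS)$, with $S>0$ fixed and $\rho_n\to0$. For $\mathbf z_n,\mathbf e_n\in[k]^n$ let \[ W(\mathbf e_n,\mathbf z_n)=\frac12\sum_{1\le a,b\le k}\Bigl(\frac{o_{ab}(\mathbf e_n)}{n^2}-\frac{\mathbb E(o_{ab}(\mathbf e_n))}{n^2}-\frac{o_{ab}(\mathbf z_n)}{n^2}+\frac{\mathbb E(o_{ab}(\mathbf z_n))}{n^2}\Bigr)\log S_{ab}, \] with expectations conditional on $\mathbf Z_n=\mathbf z_n$. Then there is a constant $D$ depending only on $S$ such that for all $\mathbf z_n,\mathbf e_n\in[k]^n$ and all $x$, \[ \mathbb P\bigl(W(\mathbf e_n,\mathbf z_n)>x\mid\mathbf Z_n=\mathbf z_n\bigr)\le\exp\Bigl[-\sup_{t\in(0,1]}\bigl\{n^2\bigl(xt-\rho_nC_t(R,S)\bigr)\bigr\}+D\rho_n m^2\Bigr], \] where $R=R(\mathbf e_n,\mathbf z_n)$, $m=d(\mathbf e_n,\mathbf z_n)$, and \[ C_t(R,S)=\sum_a\sum_{b\ne b'}[R^T\mathbf 1]_a\,K_t(S_{ab}\|S_{ab'})\,R_{b'b},\qquad K_t(p\|q)=p^{1-t}q^t+tp\log(p/q)-p. \]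
   Context: SBM with parameters $(\pi,\rho_nS)$: $k\ge2$ fixed; $\pi$ a probability vector on $[k]$ with all $\pi_a>0$; $S$ a fixed symmetric $k\times k$ matrix with strictly positive entries; $\rho_n>0$. $\mathbf Z_n$ i.i.d. with law $\pi$; given $\mathbf Z_n=\mathbf z_n$, $\mathbf A_{n\times n}$ symmetric, zero diagonal, $A_{ij}$ ($i<j$) independent Bernoulli$(\rho_nS_{z_iz_j})$. $o_{ab}(\mathbf e_n)=\sum_{i,j}\mathbf 1\{e_i=a,e_j=b\}A_{ij}$. Confusion matrix $R_{ab}(\mathbf e_n,\mathbf z_n)=\frac1n\sum_i\mathbf 1\{e_i=a,z_i=b\}$, $\mathbf 1$ the all-ones vector (so $[R^T\mathbf 1]_a=n_a(\mathbf z_n)/n$). $d(\mathbf e_n,\mathbf z_n)=\#\{i:e_i\ne z_i\}$ is the Hamming distance. *)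

From HB Require Import structures.
From mathcomp Require Import all_boot all_order all_algebra.
From mathcomp Require Import all_classical all_reals all_analysis.
Set Implicit Arguments. Unset Strict Implicit. Unset Printing Implicit Defensive.
Import Order.TTheory GRing.Theory Num.Theory.
Local Open Scope ring_scope.

Section SBM.
Variable R : realType.
Variable k n : nat.

(* An adjacency "matrix" on [n]; only symmetric, zero-diagonal ones are
   graphs (the others get probability 0). *)
Definition adj := {ffun 'I_n * 'I_n -> bool}.

Definition valid_adj (A : adj) : bool :=
  [forall i, forall j, A (i, j) == A (j, i)] && [forall i, ~~ A (i, i)].

Definition Aval (A : adj) (i j : 'I_n) : R := (A (i, j))%:R.

Definition sbm_weight (rho : R) (S : 'M[R]_k) (z : 'I_n -> 'I_k) (A : adj) : R :=
  if valid_adj A then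
    \prod_(p : 'I_n * 'I_n | (p.1 < p.2)%N)
       (if A p then rho * S (z p.1) (z p.2) else 1 - rho * S (z p.1) (z p.2))
  else 0.

Definition sbm_prob rho S z (E : pred adj) : R :=
  \sum_(A : adj | E A) sbm_weight rho S z A.

Definition sbm_expect rho S z (f : adj -> R) : R :=
  \sum_(A : adj) sbm_weight rho S z A * f A.

Definition o_count (e : 'I_n -> 'I_k) (A : adj) (a b : 'I_k) : R :=
  \sum_(i < n) \sum_(j < n) ((e i == a) && (e j == b))%:R * Aval A i j.

Definition Wstat rho S (e z : 'I_n -> 'I_k) (A : adj) : R :=
  2^-1 * \sum_(a < k) \sum_(b < k)
    ( o_count e A a b / (n%:R ^+ 2)
    - sbm_expect rho S z (fun B => o_count e B a b) / (n%:R ^+ 2)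
    - o_count z A a b / (n%:R ^+ 2)
    + sbm_expect rho S z (fun B => o_count z B a b) / (n%:R ^+ 2)) * ln (S a b).

Definition confusion (e z : 'I_n -> 'I_k) : 'M[R]_k :=
  \matrix_(a, b) (#|[set i | (e i == a) && (z i == b)]|%:R / n%:R).

Definition hamming (e z : 'I_n -> 'I_k) : nat := #|[set i | e i != z i]|.

End SBM.

Definition Kt (R : realType) (t p q : R) : R :=
  p `^ (1 - t) * q `^ t + t * p * ln (p / q) - p.

Definition Ct (R : realType) (k : nat) (t : R) (Rm S : 'M[R]_k) : R :=
  \sum_(a < k) \sum_(b < k) \sum_(b' < k | b != b')
    (Rm^T *m (const_mx 1 : 'cV[R]_k)) a ord0 * Kt t (S a b) (S a b') * Rm b' b.

From HB Require Import structures.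
From mathcomp Require Import all_boot all_order all_algebra.
From mathcomp Require Import all_classical all_reals all_analysis.
From mathcomp Require Import ring lra.
Import Order.TTheory GRing.Theory Num.Theory numFieldNormedType.Exports.
Local Open Scope ring_scope.
(* Given Z = z, n^2 W(e, z) is the centred sum, over the independent
   Bernoulli(rho S_{z_i z_j}) edges i < j, of A_ij L_ij with
   L_ij = ln S_{e_i e_j} - ln S_{z_i z_j}.  The exponential Markov inequality
   at n^2 t, and 1 + y <= e^y on each factor of the moment generating function,
   give  P(W > x) <= exp(-n^2 x t + rho sum_{i<j} K_t(S_{z_i z_j} || S_{e_i e_j})).
   A pair with exactly one mislabelled endpoint, say j, contributes
   K_t(S_{z_i z_j} || S_{z_i e_j}), and these terms summed over all i, j are
   exactly n^2 C_t(R, S).  At most m^2 pairs have both endpoints mislabelled,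
   and for t in [0, 1] convexity of K_t in t bounds each of their terms by a
   constant depending only on S.  Taking the best t gives the supremum. *)

Set Implicit Arguments. Unset Strict Implicit.

Lemma sym_mxE (T : Type) (k : nat) (M : 'M[T]_k) : M^T = M -> forall a b, M a b = M b a.
Proof. by move=> M_sym a b; rewrite -{1}M_sym mxE. Qed.

Lemma natr_card_set (T : finType) (R : pzSemiRingType) (P : pred T) :
  #|[set i | P i]|%:R = \sum_i (P i)%:R :> R.
Proof.
rewrite -sum1_card natr_sum big_mkcond; apply: eq_bigr => i _.
by rewrite inE; case: (P i).
Qed.

Lemma sum_eq_natr_mul (T : finType) (R : pzSemiRingType) (u : T) (F : T -> R) :
  \sum_a (u == a)%:R * F a = F u.
Proof.
rewrite (bigD1 u) //= eqxx mul1r big1 ?addr0 // => a.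
by rewrite eq_sym => /negbTE ->; rewrite mul0r.
Qed.

Lemma sum_upper_le (R : numDomainType) (n : nat) (X H : 'I_n -> 'I_n -> R) :
  (forall i j : 'I_n, (i < j)%N -> X i j <= H i j + H j i) ->
  (forall i j, 0 <= H i j) ->
  \sum_(p : 'I_n * 'I_n | (p.1 < p.2)%N) X p.1 p.2 <= \sum_i \sum_j H i j.
Proof.
move=> X_le H_ge0; apply: le_trans (ler_sum _ (fun p => X_le p.1 p.2)) _.
rewrite big_split /= pair_big /= [leRHS](bigID (fun p : 'I_n * 'I_n => (p.1 < p.2)%N)) /=.
rewrite lerD2l (reindex_inj (h := fun p : 'I_n * 'I_n => (p.2, p.1))) /=; last first.
  by move=> [? ?] [? ?] [-> ->].
rewrite [leLHS]big_mkcond [leRHS]big_mkcond /=; apply: ler_sum => -[i j] _ /=.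
by case: ltngtP => _; rewrite ?lexx ?H_ge0.
Qed.

Lemma Kt_expR (R : realType) (t p q : R) : 0 < p -> 0 < q ->
  Kt t p q = p * (expR (t * (ln q - ln p)) - 1 - t * (ln q - ln p)).
Proof.
move=> p_gt0 q_gt0; rewrite /Kt /powR (gt_eqF p_gt0) (gt_eqF q_gt0) -expRD.
rewrite ln_div ?posrE // -[X in expR X](addrNK (ln p)) expRD lnK ?posrE //.
have -> : (1 - t) * ln p + t * ln q - ln p = t * (ln q - ln p) by ring.
ring.
Qed.

Lemma Kt_ge0 (R : realType) (t p q : R) : 0 < p -> 0 < q -> 0 <= Kt t p q.
Proof.
move=> p_gt0 q_gt0; rewrite Kt_expR // mulr_ge0 ?(ltW p_gt0) //.
by rewrite subr_ge0 lerBrDl expR_ge1Dx.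
Qed.

Lemma Kt_xx (R : realType) (t p : R) : 0 < p -> Kt t p p = 0.
Proof. by move=> p_gt0; rewrite Kt_expR // subrr mulr0 expR0 subrr subr0 mulr0. Qed.

(* Convexity of exp gives e^(t d) <= 1 - t + t e^d, i.e. K_t <= t K_1. *)
Lemma Kt_le_Kt1 (R : realType) (t p q : R) : 0 <= t -> t <= 1 -> 0 < p -> 0 < q ->
  Kt t p q <= Kt 1 p q.
Proof.
move=> t_ge0 t_le1 p_gt0 q_gt0; rewrite !Kt_expR // mul1r ler_pM2l //.
set d := ln q - ln p.
have := convex_expR (Itv01 t_ge0 t_le1) d 0.
rewrite !convRE /= mulr0 addr0 expR0 mulr1 /unstable.onem => exp_convex.
have : 0 <= (1 - t) * (expR d - 1 - d).
  by rewrite mulr_ge0 ?subr_ge0 // lerBrDl expR_ge1Dx.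
nra.
Qed.

Section BernoulliProduct.
Variables (R : realType) (I : finType) (q : I -> R).

Definition bernoulli_mass (p : I) (b : bool) : R := if b then q p else 1 - q p.

Definition bernoulli_weight (f : {ffun I -> bool}) : R := \prod_p bernoulli_mass p (f p).

Lemma bernoulli_expect_prod (g : I -> bool -> R) :
  \sum_(f : {ffun I -> bool}) bernoulli_weight f * \prod_p g p (f p)
  = \prod_p (q p * g p true + (1 - q p) * g p false).
Proof.
transitivity (\sum_(f : {ffun I -> bool}) \prod_p (bernoulli_mass p (f p) * g p (f p))).
  by apply: eq_bigr => f _; rewrite big_split.
rewrite -(bigA_distr_bigA (fun p b => bernoulli_mass p b * g p b)).
by apply: eq_bigr => p _; rewrite big_bool.
Qed.

Lemma bernoulli_expect_coord p0 :
  \sum_(f : {ffun I -> bool}) bernoulli_weight f * (f p0)%:R = q p0.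
Proof.
pose g p (b : bool) : R := if p == p0 then b%:R else 1.
transitivity (\sum_(f : {ffun I -> bool}) bernoulli_weight f * \prod_p g p (f p)).
  apply: eq_bigr => f _; rewrite (bigD1 p0) //= /g eqxx big1 ?mulr1 //.
  by move=> p /negbTE ->.
rewrite bernoulli_expect_prod (bigD1 p0) //= /g eqxx mulr1 mulr0 addr0 big1 ?mulr1 //.
by move=> p /negbTE ->; rewrite !mulr1 addrC subrK.
Qed.

Lemma bernoulli_expect_linear (c : I -> R) :
  \sum_(f : {ffun I -> bool}) bernoulli_weight f * \sum_p (f p)%:R * c p
  = \sum_p q p * c p.
Proof.
under eq_bigr do rewrite mulr_sumr.
rewrite exchange_big /=; apply: eq_bigr => p _.
under eq_bigr do rewrite mulrA.
by rewrite -mulr_suml bernoulli_expect_coord.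
Qed.

Lemma bernoulli_expect_expR_linear (c : I -> R) :
  \sum_(f : {ffun I -> bool}) bernoulli_weight f * expR (\sum_p (f p)%:R * c p)
  = \prod_p (1 - q p + q p * expR (c p)).
Proof.
transitivity (\sum_(f : {ffun I -> bool}) bernoulli_weight f * \prod_p expR ((f p)%:R * c p)).
  by apply: eq_bigr => f _; rewrite expR_sum.
rewrite (bernoulli_expect_prod (fun p b => expR (b%:R * c p))).
by apply: eq_bigr => p _; rewrite mul1r mul0r expR0 mulr1 addrC.
Qed.

Hypothesis q01 : forall p, 0 <= q p <= 1.

Lemma bernoulli_centered_mgf_le (c : I -> R) :
  \sum_(f : {ffun I -> bool})
     bernoulli_weight f * expR (\sum_p (f p)%:R * c p - \sum_p q p * c p)
  <= expR (\sum_p q p * (expR (c p) - 1 - c p)).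
Proof.
under eq_bigr do rewrite expRD mulrA.
rewrite -mulr_suml bernoulli_expect_expR_linear.
have -> : \sum_p q p * (expR (c p) - 1 - c p)
          = \sum_p q p * (expR (c p) - 1) - \sum_p q p * c p.
  by rewrite -sumrB; apply: eq_bigr => p _; ring.
rewrite expRD expR_sum ler_wpM2r ?expR_ge0 //; apply: ler_prod => p _.
have /andP[q_ge0 q_le1] := q01 p.
rewrite addr_ge0 ?subr_ge0 ?mulr_ge0 ?expR_ge0 //=.
have -> : 1 - q p + q p * expR (c p) = 1 + q p * (expR (c p) - 1) by ring.
exact: expR_ge1Dx.
Qed.

End BernoulliProduct.

Section SBMAsBernoulliProduct.
Variables (R : realType) (k n : nat) (rho : R) (S : 'M[R]_k) (z : 'I_n -> 'I_k).

(* Pairs off the upper triangle get probability 0, so the SBM law becomes a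
   product measure on all of {ffun 'I_n * 'I_n -> bool}. *)
Definition edge_prob (p : 'I_n * 'I_n) : R :=
  if (p.1 < p.2)%N then rho * S (z p.1) (z p.2) else 0.

Definition sym_adj (f : {ffun 'I_n * 'I_n -> bool}) : adj n :=
  [ffun p : 'I_n * 'I_n => if (p.1 < p.2)%N then f p
             else if (p.2 < p.1)%N then f (p.2, p.1) else false].

Definition upper_adj (A : adj n) : {ffun 'I_n * 'I_n -> bool} :=
  [ffun p : 'I_n * 'I_n => (p.1 < p.2)%N && A p].

Lemma valid_sym_adj f : valid_adj (sym_adj f).
Proof.
apply/andP; split.
  by apply/forallP => i; apply/forallP => j; rewrite !ffunE /=; case: ltngtP.
by apply/forallP => i; rewrite ffunE /= ltnn.
Qed.

Lemma upper_adjK A : valid_adj A -> sym_adj (upper_adj A) = A.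
Proof.
move=> /andP[/forallP A_sym /forallP A_irr]; apply/ffunP => -[i j]; rewrite !ffunE /=.
case: ltngtP => [//|_|/val_inj ->]; first by apply/esym/eqP/(forallP (A_sym i)).
by case: (A (j, j)) (A_irr j).
Qed.

Lemma upper_sym_adjE f :
  (upper_adj (sym_adj f) == f) = [forall p, f p ==> (p.1 < p.2)%N].
Proof.
apply/eqP/forallP => [<- p|f_upper]; first by rewrite ffunE; apply/implyP => /andP[].
apply/ffunP => p; rewrite !ffunE; case: ltnP => // p_low.
by have := f_upper p; rewrite ltnNge p_low; case: (f p).
Qed.

Lemma sbm_weight_upper A : valid_adj A ->
  sbm_weight rho S z A = bernoulli_weight edge_prob (upper_adj A).
Proof.
move=> A_valid; rewrite /sbm_weight A_valid /bernoulli_weight.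
rewrite [RHS](bigID (fun p : 'I_n * 'I_n => (p.1 < p.2)%N)) /=.
rewrite [X in _ = _ * X]big1 ?mulr1; last first.
  by move=> p /negbTE p_low; rewrite ffunE p_low /bernoulli_mass /edge_prob p_low subr0.
by apply: eq_bigr => p p_up; rewrite ffunE p_up /bernoulli_mass /edge_prob p_up.
Qed.

Lemma sbm_expectE (G : adj n -> R) :
  sbm_expect rho S z G
  = \sum_(f : {ffun 'I_n * 'I_n -> bool}) bernoulli_weight edge_prob f * G (sym_adj f).
Proof.
rewrite /sbm_expect (bigID (@valid_adj n)) /= [X in _ + X]big1 ?addr0; last first.
  by move=> A /negbTE A_invalid; rewrite /sbm_weight A_invalid mul0r.
rewrite (reindex_onto sym_adj upper_adj) /=; last exact: upper_adjK.
rewrite [RHS](bigID (fun f => upper_adj (sym_adj f) == f)) /=.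
rewrite [X in _ = _ + X]big1 ?addr0; last first.
  move=> f; rewrite upper_sym_adjE => /forallPn[p]; rewrite negb_imply => /andP[fp p_low].
  by rewrite /bernoulli_weight (bigD1 p) //= /bernoulli_mass fp /edge_prob (negbTE p_low) !mul0r.
apply: eq_big => [f|f /andP[_ /eqP fK]]; first by rewrite valid_sym_adj.
by rewrite sbm_weight_upper ?valid_sym_adj // fK.
Qed.

Lemma sbm_expect_sum (J : finType) (F : J -> adj n -> R) :
  sbm_expect rho S z (fun A => \sum_j F j A) = \sum_j sbm_expect rho S z (F j).
Proof. by rewrite /sbm_expect exchange_big; apply: eq_bigr => A _; rewrite mulr_sumr. Qed.

Lemma sbm_expectBMr (F G : adj n -> R) (c : R) :
  sbm_expect rho S z (fun A => (F A - G A) * c)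
  = (sbm_expect rho S z F - sbm_expect rho S z G) * c.
Proof. by rewrite /sbm_expect -sumrB mulr_suml; apply: eq_bigr => A _; ring. Qed.

Hypothesis rhoS01 : forall a b, 0 <= rho * S a b <= 1.

Lemma edge_prob01 p : 0 <= edge_prob p <= 1.
Proof. by rewrite /edge_prob; case: ifP => _; rewrite ?rhoS01 ?lexx ?ler01. Qed.

Lemma sbm_weight_ge0 A : 0 <= sbm_weight rho S z A.
Proof.
rewrite /sbm_weight; case: ifP => // _; apply: prodr_ge0 => p _.
by have /andP[? ?] := rhoS01 (z p.1) (z p.2); case: (A p); rewrite ?subr_ge0.
Qed.

Lemma sbm_prob_le_expect_expR (W : adj n -> R) (x s : R) : 0 <= s ->
  sbm_prob rho S z (fun A => x < W A)
  <= sbm_expect rho S z (fun A => expR (s * (W A - x))).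
Proof.
move=> s_ge0; rewrite /sbm_prob /sbm_expect big_mkcond /=; apply: ler_sum => A _.
case: ifP => [x_lt_W|_]; last by rewrite mulr_ge0 ?sbm_weight_ge0 ?expR_ge0.
rewrite -[leLHS]mulr1 ler_wpM2l ?sbm_weight_ge0 // -expR0 ler_expR.
by rewrite mulr_ge0 // subr_ge0 ltW.
Qed.

End SBMAsBernoulliProduct.

Section LogLikelihoodRatio.
Variables (R : realType) (k n : nat) (rho : R) (S : 'M[R]_k) (z e : 'I_n -> 'I_k).
Hypothesis S_sym : S^T = S.

Definition llr (i j : 'I_n) : R := ln (S (e i) (e j)) - ln (S (z i) (z j)).

Definition llr_sum (A : adj n) : R := \sum_i \sum_j Aval R A i j * llr i j.

Definition upper_llr (i j : 'I_n) : R := if (i < j)%N then llr i j else 0.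

Lemma sum_o_count (u : 'I_n -> 'I_k) (A : adj n) (F : 'I_k -> 'I_k -> R) :
  \sum_a \sum_b o_count R u A a b * F a b = \sum_i \sum_j Aval R A i j * F (u i) (u j).
Proof.
under eq_bigr do under eq_bigr do rewrite /o_count mulr_suml.
under eq_bigr do rewrite exchange_big /=.
rewrite exchange_big /=; apply: eq_bigr => i _.
under eq_bigr do under eq_bigr do rewrite mulr_suml.
under eq_bigr do rewrite exchange_big /=.
rewrite exchange_big /=; apply: eq_bigr => j _.
under eq_bigr => a _ do under eq_bigr => b _ do rewrite -mulnb natrM -!mulrA.
under eq_bigr => a _ do rewrite -mulr_sumr sum_eq_natr_mul.
exact: sum_eq_natr_mul.
Qed.

Lemma Wstat_llr_sum A :
  Wstat rho S e z A = (2 * n%:R ^+ 2)^-1 * (llr_sum A - sbm_expect rho S z llr_sum).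
Proof.
have llr_sumE B : llr_sum B
    = \sum_a \sum_b (o_count R e B a b - o_count R z B a b) * ln (S a b).
  under [RHS]eq_bigr do under eq_bigr do rewrite mulrBl.
  under [RHS]eq_bigr do rewrite sumrB.
  rewrite sumrB !sum_o_count -sumrB; apply: eq_bigr => i _.
  by rewrite -sumrB; apply: eq_bigr => j _; rewrite -mulrBr.
rewrite (funext llr_sumE) sbm_expect_sum.
under [X in _ - X]eq_bigr do rewrite sbm_expect_sum.
under [X in _ - X]eq_bigr do under eq_bigr do rewrite sbm_expectBMr.
rewrite /Wstat -sumrB !mulr_sumr; apply: eq_bigr => a _.
rewrite -sumrB !mulr_sumr; apply: eq_bigr => b _.
by rewrite (invfM 2); ring.
Qed.

Lemma llr_sum_upper A : valid_adj A ->
  llr_sum A = 2 * \sum_i \sum_j Aval R A i j * upper_llr i j.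
Proof.
case/andP => /forallP A_sym /forallP A_irr.
have llrC i j : llr j i = llr i j by rewrite /llr !(sym_mxE S_sym (e j)) (sym_mxE S_sym (z j)).
transitivity (\sum_i \sum_j (Aval R A i j * upper_llr i j + Aval R A j i * upper_llr j i)).
  apply: eq_bigr => i _; apply: eq_bigr => j _.
  have A_ji : A (j, i) = A (i, j) by apply/esym/eqP/(forallP (A_sym i)).
  rewrite /Aval /upper_llr A_ji; case: ltngtP => [_|_|/val_inj ij].
  - by rewrite mulr0 addr0.
  - by rewrite mulr0 add0r llrC.
  - by rewrite ij (negbTE (A_irr j)) !mul0r addr0.
under eq_bigr do rewrite big_split /=.
by rewrite big_split /= [X in _ + X]exchange_big /= mulr2n mulrDl mul1r.
Qed.

Lemma llr_sum_sym_adj f :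
  llr_sum (sym_adj f) = 2 * \sum_(p : 'I_n * 'I_n) (f p)%:R * upper_llr p.1 p.2.
Proof.
rewrite llr_sum_upper ?valid_sym_adj // pair_big /=; congr (_ * _).
apply: eq_bigr => -[i j] _; rewrite /Aval /upper_llr ffunE /=.
by case: ifP => // _; rewrite !mulr0.
Qed.

Lemma Wstat_sym_adj f :
  n%:R ^+ 2 * Wstat rho S e z (sym_adj f)
  = \sum_p (f p)%:R * upper_llr p.1 p.2 - \sum_p edge_prob rho S z p * upper_llr p.1 p.2.
Proof.
rewrite Wstat_llr_sum sbm_expectE.
under eq_bigr do rewrite llr_sum_sym_adj mulrCA.
rewrite -mulr_sumr bernoulli_expect_linear llr_sum_sym_adj -mulrBr mulrA.
have [n0|n_gt0] := posnP n.
  have sum0 (F : 'I_n * 'I_n -> R) : \sum_p F p = 0.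
    by apply: big1 => -[i j] _; have := ltn_ord i; rewrite {2}n0.
  by rewrite !sum0 subrr !mulr0.
rewrite mulrA [X in X * _](_ : _ = 1) ?mul1r //.
by field; rewrite pnatr_eq0 -lt0n.
Qed.

End LogLikelihoodRatio.

Section RelabellingCost.
Variables (R : realType) (k n : nat) (S : 'M[R]_k) (z e : 'I_n -> 'I_k) (t : R).
Hypotheses (S_sym : S^T = S) (S_gt0 : forall a b, 0 < S a b).
Hypotheses (t_ge0 : 0 <= t) (t_le1 : t <= 1).

Definition Kt_bound : R :=
  \sum_(u : 'I_k * 'I_k) \sum_(v : 'I_k * 'I_k) Kt 1 (S u.1 u.2) (S v.1 v.2).

Lemma Kt_bound_ge0 : 0 <= Kt_bound.
Proof. by do 2!(apply: sumr_ge0 => ? _); apply: Kt_ge0; apply: S_gt0. Qed.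

Lemma Kt_le_bound a b c d : Kt t (S a b) (S c d) <= Kt_bound.
Proof.
apply: le_trans (Kt_le_Kt1 t_ge0 t_le1 (S_gt0 a b) (S_gt0 c d)) _.
rewrite /Kt_bound (bigD1 (a, b)) //= (bigD1 (c, d)) //= -addrA lerDl.
by apply: addr_ge0; do ?apply: sumr_ge0 => ? _; apply: Kt_ge0; apply: S_gt0.
Qed.

Definition mismatch (i : 'I_n) : R := (e i != z i)%:R.

Definition relabel_cost (i j : 'I_n) : R :=
  mismatch j * Kt t (S (z i) (z j)) (S (z i) (e j)).

Lemma relabel_cost_ge0 i j : 0 <= relabel_cost i j.
Proof. by rewrite mulr_ge0 ?ler0n ?Kt_ge0. Qed.

(* With one mislabelled endpoint the pair costs exactly a relabelling cost
   (by symmetry of S when it is i); with two it is bounded by Kt_bound. *)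
Lemma Kt_pair_le i j :
  Kt t (S (z i) (z j)) (S (e i) (e j))
  <= relabel_cost i j + relabel_cost j i + Kt_bound * mismatch i * mismatch j.
Proof.
rewrite /relabel_cost /mismatch.
have K_ge0 a b c d : 0 <= Kt t (S a b) (S c d) by apply: Kt_ge0.
case: (eqVneq (e i) (z i)) => [ei|_]; case: (eqVneq (e j) (z j)) => [ej|_] /=.
- by rewrite ei ej Kt_xx // !mul0r mulr0 !addr0.
- by rewrite ei; lra.
- by rewrite ej (sym_mxE S_sym (z i)) (sym_mxE S_sym (e i)); lra.
- have := Kt_le_bound (z i) (z j) (e i) (e j).
  have := K_ge0 (z i) (z j) (z i) (e j); have := K_ge0 (z j) (z i) (z j) (e i); lra.
Qed.

Lemma sum_mismatch : \sum_i mismatch i = (hamming e z)%:R.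
Proof. by rewrite /hamming natr_card_set. Qed.

Lemma confusion_colsum a :
  ((confusion R e z)^T *m (const_mx 1 : 'cV[R]_k)) a ord0 = (\sum_i (z i == a)%:R) / n%:R.
Proof.
rewrite mxE; under eq_bigr do rewrite !mxE mulr1 natr_card_set.
rewrite -mulr_suml exchange_big /=; congr (_ / _); apply: eq_bigr => i _.
by under eq_bigr do rewrite -mulnb natrM; rewrite sum_eq_natr_mul.
Qed.

Lemma confusion_entry b' b :
  confusion R e z b' b = (\sum_j ((e j == b') && (z j == b))%:R) / n%:R.
Proof. by rewrite mxE natr_card_set. Qed.

Lemma relabel_cost_sum i j :
  \sum_a \sum_b \sum_(b' | b != b')
     (z i == a)%:R * Kt t (S a b) (S a b') * ((e j == b') && (z j == b))%:R
  = relabel_cost i j.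
Proof.
rewrite (bigD1 (z i)) //= [X in _ + X]big1 ?addr0; last first.
  move=> a; rewrite eq_sym => /negbTE zi_a; apply: big1 => b _; apply: big1 => b' _.
  by rewrite zi_a !mul0r.
rewrite (bigD1 (z j)) //= [X in _ + X]big1 ?addr0; last first.
  move=> b; rewrite eq_sym => /negbTE zj_b; apply: big1 => b' _.
  by rewrite zj_b andbF mulr0.
under eq_bigr do rewrite !eqxx andbT mul1r.
rewrite /relabel_cost /mismatch; have [ej|ej] := eqVneq (e j) (z j).
  rewrite mul0r; apply: big1 => b' zj_b'.
  by rewrite ej (negbTE zj_b') mulr0.
rewrite (bigD1 (e j)) 1?eq_sym //= [X in _ + X]big1 ?addr0; last first.
  by move=> b' /andP[_ b'_ej]; rewrite eq_sym (negbTE b'_ej) mulr0.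
by rewrite eqxx mulr1 mul1r.
Qed.

Lemma sum_relabel_cost :
  \sum_i \sum_j relabel_cost i j = n%:R ^+ 2 * Ct t (confusion R e z) S.
Proof.
have [n0|n_gt0] := posnP n.
  rewrite big1 => [|i]; last by have := ltn_ord i; rewrite {2}n0.
  by rewrite [n in n%:R]n0 expr0n mul0r.
have -> : n%:R ^+ 2 * Ct t (confusion R e z) S
    = \sum_a \sum_b \sum_(b' | b != b') \sum_i \sum_j
        (z i == a)%:R * Kt t (S a b) (S a b') * ((e j == b') && (z j == b))%:R.
  rewrite /Ct mulr_sumr; apply: eq_bigr => a _; rewrite mulr_sumr; apply: eq_bigr => b _.
  rewrite mulr_sumr; apply: eq_bigr => b' _.
  rewrite confusion_colsum confusion_entry -big_distrlr /= -mulr_suml.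
  by field; rewrite pnatr_eq0 -lt0n.
under eq_bigr do under eq_bigr do rewrite -relabel_cost_sum.
rewrite pair_big /= exchange_big /=; apply: eq_bigr => a _.
rewrite exchange_big /=; apply: eq_bigr => b _.
by rewrite exchange_big /=; apply: eq_bigr => b' _; rewrite pair_big.
Qed.

Lemma sum_Kt_upper_le :
  \sum_(p : 'I_n * 'I_n | (p.1 < p.2)%N) Kt t (S (z p.1) (z p.2)) (S (e p.1) (e p.2))
  <= n%:R ^+ 2 * Ct t (confusion R e z) S + Kt_bound * (hamming e z)%:R ^+ 2.
Proof.
pose H i j := relabel_cost i j + Kt_bound * mismatch i * mismatch j.
have mismatch2_ge0 i j : 0 <= Kt_bound * mismatch i * mismatch j.
  by rewrite !mulr_ge0 ?Kt_bound_ge0 ?ler0n.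
have -> : n%:R ^+ 2 * Ct t (confusion R e z) S + Kt_bound * (hamming e z)%:R ^+ 2
    = \sum_i \sum_j H i j.
  rewrite -sum_relabel_cost -sum_mismatch expr2 big_distrlr /= mulr_sumr -big_split /=.
  apply: eq_bigr => i _; rewrite mulr_sumr -big_split /=.
  by apply: eq_bigr => j _; rewrite mulrA.
apply: (sum_upper_le (X := fun i j => Kt t (S (z i) (z j)) (S (e i) (e j))))
  => [i j _|i j]; last by rewrite addr_ge0 ?relabel_cost_ge0.
have := mismatch2_ge0 j i; have := Kt_pair_le i j; rewrite /H; lra.
Qed.

End RelabellingCost.

Section WstatTail.
Variables (R : realType) (k n : nat) (rho : R) (S : 'M[R]_k) (z e : 'I_n -> 'I_k).
Hypotheses (S_sym : S^T = S) (S_gt0 : forall a b, 0 < S a b).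
Hypotheses (rho_ge0 : 0 <= rho) (rhoS_le1 : forall a b, rho * S a b <= 1).

Let rhoS01 a b : 0 <= rho * S a b <= 1.
Proof. by rewrite rhoS_le1 andbT mulr_ge0 // ltW. Qed.

Lemma sbm_Wstat_tail_le_Kt (x t : R) : 0 <= t ->
  sbm_prob rho S z (fun A => x < Wstat rho S e z A)
  <= expR (- (n%:R ^+ 2 * (x * t))
           + rho * \sum_(p : 'I_n * 'I_n | (p.1 < p.2)%N)
                     Kt t (S (z p.1) (z p.2)) (S (e p.1) (e p.2))).
Proof.
move=> t_ge0; set N : R := n%:R ^+ 2.
apply: le_trans (sbm_prob_le_expect_expR z rhoS01 _ x (mulr_ge0 (exprn_ge0 2 (ler0n R n)) t_ge0)) _.
rewrite sbm_expectE.
pose c (p : 'I_n * 'I_n) := t * upper_llr S z e p.1 p.2.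
have exponentE f : N * t * (Wstat rho S e z (sym_adj f) - x)
    = - (N * (x * t)) + (\sum_p (f p)%:R * c p - \sum_p edge_prob rho S z p * c p).
  have sum_cE (F : 'I_n * 'I_n -> R) :
      \sum_p F p * c p = t * \sum_p F p * upper_llr S z e p.1 p.2.
    by rewrite mulr_sumr; apply: eq_bigr => p _; rewrite mulrCA.
  by rewrite !sum_cE -mulrBr -(Wstat_sym_adj rho z e S_sym) /N; ring.
under eq_bigr do rewrite exponentE expRD mulrCA.
rewrite -mulr_sumr expRD ler_wpM2l ?expR_ge0 //.
have -> : rho * \sum_(p : 'I_n * 'I_n | (p.1 < p.2)%N) Kt t (S (z p.1) (z p.2)) (S (e p.1) (e p.2))
    = \sum_p edge_prob rho S z p * (expR (c p) - 1 - c p).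
  rewrite mulr_sumr big_mkcond; apply: eq_bigr => p _ /=.
  rewrite /edge_prob /c /upper_llr; case: ifP => _; last by rewrite mulr0 mul0r.
  by rewrite Kt_expR // mulrA.
exact: (bernoulli_centered_mgf_le (edge_prob01 z rhoS01)).
Qed.

Lemma sbm_Wstat_tail_le_Ct (x t : R) : 0 <= t -> t <= 1 ->
  sbm_prob rho S z (fun A => x < Wstat rho S e z A)
  <= expR (- (n%:R ^+ 2 * (x * t - rho * Ct t (confusion R e z) S))
           + Kt_bound S * rho * (hamming e z)%:R ^+ 2).
Proof.
move=> t_ge0 t_le1; apply: le_trans (sbm_Wstat_tail_le_Kt x t_ge0) _.
rewrite ler_expR.
have := ler_wpM2l rho_ge0 (sum_Kt_upper_le z e S_sym S_gt0 t_ge0 t_le1).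
rewrite mulrDr => sum_le.
have -> : - (n%:R ^+ 2 * (x * t - rho * Ct t (confusion R e z) S))
          + Kt_bound S * rho * (hamming e z)%:R ^+ 2
        = - (n%:R ^+ 2 * (x * t))
          + (rho * (n%:R ^+ 2 * Ct t (confusion R e z) S)
             + rho * (Kt_bound S * (hamming e z)%:R ^+ 2)) by ring.
by rewrite lerD2l.
Qed.

End WstatTail.

Local Open Scope classical_set_scope.
Local Open Scope ring_scope.

Lemma le_expR_Nsup (R : realType) (E : set R) (P c : R) : E !=set0 ->
  (forall y, E y -> P <= expR (- y + c)) -> P <= expR (- sup E + c).
Proof.
move=> E_neq0 P_le.
have [P_le0|P_gt0] := leP P 0; first exact: le_trans P_le0 (expR_ge0 _).
have E_ub : ubound E (c - ln P).
  move=> y Ey; have := P_le y Ey.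
  by rewrite -ler_ln ?posrE ?expR_gt0 // expRK; lra.
have := ge_sup E_neq0 E_ub => sup_le.
by rewrite -[P]lnK ?posrE // ler_expR; lra.
Qed.

Unset Implicit Arguments.

Theorem proposition2 (R : realType) (k : nat) (S : 'M[R]_k) :
  (2 <= k)%N ->
  S^T = S ->
  (forall a b, 0 < S a b) ->
  exists D : R,
    forall (pi : 'I_k -> R) (rho : nat -> R),
      (forall a, 0 < pi a) -> \sum_(a < k) pi a = 1 ->
      (forall m, 0 < rho m) ->
      (forall m a b, rho m * S a b <= 1) ->
      rho m @[m --> \oo] --> (0 : R) ->
      forall (n : nat) (z e : 'I_n -> 'I_k) (x : R),
        sbm_prob (rho n) S z (fun A => x < Wstat (rho n) S e z A)
        <= expR (- sup [set (n%:R ^+ 2 * (x * t - rho n * Ct t (confusion R e z) S))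
                         | t in `]0, 1]]
                 + D * rho n * (hamming e z)%:R ^+ 2).
Proof.
move=> _ S_sym S_gt0.
exists (Kt_bound S) => pi rho _ _ rho_gt0 rhoS_le1 _ n z e x.
apply: le_expR_Nsup => [|_ [t t_in <-]].
  exists (n%:R ^+ 2 * (x * 1 - rho n * Ct 1 (confusion R e z) S)), 1 => //=.
  by rewrite in_itv /= ltr01 lexx.
move: t_in; rewrite /= in_itv /= => /andP[t_gt0 t_le1].
apply: (sbm_Wstat_tail_le_Ct z e S_sym S_gt0 (ltW (rho_gt0 n)) (rhoS_le1 n) x)
  => //; exact: ltW.
Qed.
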